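(* Let $\Sigma$ be a ranked alphabet, $B$ a bi-locally finite strong bimonoid and $\mathcal{A}$ a $(\Sigma,B)$-wta. Then $[\![\mathcal{A}]\!]^{\mathrm{run}}=[\![\mathcal{R}(\mathcal{A})]\!]^{\mathrm{run}}$.
   Context: Ranked alphabet $\Sigma$ ($\Sigma^{(0)}\ne\emptyset$), trees $T_\Sigma$, positions $\mathrm{pos}(\xi)$; strong bimonoid $(B,\oplus,\otimes,\mathbb{0},\mathbb{1})$ (commutative monoid $(B,\oplus,\mathbb{0})$, monoid $(B,\otimes,\mathbb{1})$, $\mathbb{0}\ne\mathbb{1}$, $\mathbb{0}$ absorbing). $B$ is bi-locally finite if both $(B,\oplus,\mathbb{0})$ and $(B,\otimes,\mathbb{1})$ are locally finite (every finite subset generates a finite submonoid). For $b\in B$, $nb$ is the $n$-fold sum ($0b=\mathbb{0}$); if $\{nb\mid n\in\mathbb{N}\}$ is finite, the index $i(b)$ is the least $i\ge1$ with $ib=(i+k)b$ for some $k\ge1$ and the period $p(b)$ is the least $p\ge1$ with $i(b)b=(i(b)+p)b$. $(\Sigma,B)$-wta $\mathcal{A}=(Q,\delta,F)$: $Q$ finite nonempty, $\delta_k:Q^k\times\Sigma^{(k)}\times Q\to B$, $F:Q\to B$. Runs $\rho:\mathrm{pos}(\xi)\to Q$ ($R_{\mathcal{A}}(\xi)$; $R_{\mathcal{A}}(q,\xi)$ those with $\rho(\varepsilon)=q$), $\rho|_i(w)=\rho(iw)$, $\mathrm{wt}_{\mathcal{A}}(\rho)=\big(\bigotimes_{i=1}^k\mathrm{wt}_{\mathcal{A}}(\rho|_i)\big)\otimes\delta_k(\rho(1)\dots\rho(k),\sigma,\rho(\varepsilon))$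 for $\xi=\sigma(\xi_1,\dots,\xi_k)$; $[\![\mathcal{A}]\!]^{\mathrm{run}}(\xi)=\bigoplus_{\rho\in R_{\mathcal{A}}(\xi)}\mathrm{wt}_{\mathcal{A}}(\rho)\otimes F_{\rho(\varepsilon)}$. $H_{\mathcal{A}}$: smallest subset of $B$ containing $\bigcup_k\mathrm{im}(\delta_k)$ and closed under $\otimes$. When $H_{\mathcal{A}}$ is finite and every element of $H_{\mathcal{A}}\otimes\mathrm{im}(F)$ has finite order in $(B,\oplus,\mathbb{0})$ (the finite order property; it holds when $B$ is bi-locally finite), define $i_{\mathcal{A}}=\max\{i(b)\mid b\in H_{\mathcal{A}}\otimes\mathrm{im}(F)\}$, $p_{\mathcal{A}}=\mathrm{lcm}\{p(b)\mid b\in H_{\mathcal{A}}\otimes\mathrm{im}(F)\}$, $J_{\mathcal{A}}(n)=n$ if $n<i_{\mathcal{A}}$, else $i_{\mathcal{A}}+((n-i_{\mathcal{A}})\bmod p_{\mathcal{A}})$; $p_\xi(q,b)=|\{\rho\in R_{\mathcal{A}}(q,\xi)\mid\mathrm{wt}_{\mathcal{A}}(\rho)=b\}|$ and $\pi_\xi(q,b)=J_{\mathcal{A}}(p_\xi(q,b))$ for $(q,b)\in Q\times H_{\mathcal{A}}$. $\mathcal{R}(\mathcal{A})=(Q_{\mathcal{R}},\delta_{\mathcal{R}},F_{\mathcal{R}})$: $Q_{\mathcal{R}}=\{\pi_\xi\mid\xi\in T_\Sigma\}$; $(\delta_{\mathcal{R}})_k(\pi_{\xi_1}\dots\pi_{\xi_k},\sigma,\pi)=\mathbb{1}$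 if $\pi=\pi_{\sigma(\xi_1,\dots,\xi_k)}$ and $\mathbb{0}$ otherwise (independent of the choice of the $\xi_i$); $(F_{\mathcal{R}})_{\pi_\xi}=\bigoplus_{(q,b)\in Q\times H_{\mathcal{A}}}\pi_\xi(q,b)(b\otimes F_q)$. *)

From Stdlib Require Import ClassicalEpsilon.
From Stdlib Require List.
From mathcomp Require Import all_boot.

Set Implicit Arguments.
Unset Strict Implicit.
Unset Printing Implicit Defensive.

Definition asb (P : Prop) : bool :=
  if excluded_middle_informative P then true else false.

(* the least natural number satisfying P (0 if there is none) *)
Definition least (P : nat -> Prop) : nat :=
  epsilon (inhabits 0%N) (fun n => P n /\ forall m, P m -> (n <= m)%N).

Record bimonoid := Bimonoid {
  bcar :> Type;
  badd : bcar -> bcar -> bcar;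
  bmul : bcar -> bcar -> bcar;
  bzero : bcar;
  bone : bcar }.
Arguments badd : clear implicits.
Arguments bmul : clear implicits.
Arguments bzero : clear implicits.
Arguments bone : clear implicits.

Definition strong_bimonoid (B : bimonoid) : Prop :=
  associative (badd B) /\ commutative (badd B) /\
  left_id (bzero B) (badd B) /\ right_id (bzero B) (badd B) /\
  associative (bmul B) /\ left_id (bone B) (bmul B) /\
  right_id (bone B) (bmul B) /\
  bzero B <> bone B /\
  left_zero (bzero B) (bmul B) /\ right_zero (bzero B) (bmul B).

Inductive generated (B : Type) (op : B -> B -> B) (e : B) (s : seq B)
    : B -> Prop :=
  | gen_unit : generated op e s e
  | gen_elem x : List.In x s -> generated op e s x
  | gen_op x y : generated op e s x -> generated op e s y ->
                 generated op e s (op x y).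

Definition locally_finite (B : Type) (op : B -> B -> B) (e : B) : Prop :=
  forall s : seq B, exists l : seq B,
    forall x, generated op e s x -> List.In x l.

Definition bi_locally_finite (B : bimonoid) : Prop :=
  locally_finite (badd B) (bzero B) /\ locally_finite (bmul B) (bone B).

Definition nsum (B : bimonoid) (n : nat) (b : B) : B :=
  iter n (badd B b) (bzero B).

Definition index_of (B : bimonoid) (b : B) : nat :=
  least (fun i => (1 <= i)%N /\
     exists k, (1 <= k)%N /\ nsum i b = nsum (i + k) b).

Definition period_of (B : bimonoid) (b : B) : nat :=
  least (fun p => (1 <= p)%N /\
     nsum (index_of b) b = nsum (index_of b + p) b).

Inductive tree (S : Type) (rk : S -> nat) : Type :=
  | Node (s : S) of ('I_(rk s) -> tree rk).
Arguments Node {S rk} s _.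

(* all choice functions of a family of lists indexed by 'I_k *)
Fixpoint choices (T : Type) (k : nat) : ('I_k -> seq T) -> seq ('I_k -> T) :=
  match k return ('I_k -> seq T) -> seq ('I_k -> T) with
  | 0 => fun _ => [:: fun i : 'I_0 => False_rect T (notF (ltn_ord i))]
  | k'.+1 => fun L =>
      [seq (fun i : 'I_k'.+1 =>
              match unlift ord0 i with Some j => g j | None => x end)
      | x <- L ord0, g <- choices (fun j : 'I_k' => L (lift ord0 j))]
  end.

Section WTA.
Variables (Sigma : Type) (rk : Sigma -> nat) (B : bimonoid).

(* A (Sigma,B)-wta: a finite state set (given as a duplicate-free list
   [wstates] of elements of the carrier [wst]), transition weights
   delta_k(q_1..q_k, sigma, q) = wdelta sigma (q_1..q_k) q, and root
   weights wfin. *)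
Record wta := Wta {
  wst : Type;
  wstates : seq wst;
  wdelta : forall s : Sigma, ('I_(rk s) -> wst) -> wst -> B;
  wfin : wst -> B }.
Arguments wst : clear implicits.
Arguments wstates : clear implicits.
Arguments wdelta : clear implicits.
Arguments wfin : clear implicits.

Variable A : wta.

(* a run on xi is a tree with the same shape as xi whose node at position
   w is labelled (xi(w), rho(w)) *)
Definition rk_run (p : Sigma * wst A) : nat := rk p.1.
Definition run := tree rk_run.

Definition run_root (r : run) : wst A := let: Node p _ := r in p.2.

(* R_A(xi): all runs on xi (each exactly once if wstates is duplicate-free) *)
Fixpoint runs (t : tree rk) : seq run :=
  match t with
  | Node s f =>
      [seq Node (s, q) g | q <- wstates A,
                           g <- choices (fun i => runs (f i))]
  end.

Fixpoint run_wt (r : run) : B :=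
  match r with
  | Node p g =>
      bmul B (\big[bmul B/bone B]_(i < rk p.1) run_wt (g i))
             (wdelta A p.1 (fun i => run_root (g i)) p.2)
  end.

Definition run_sem (t : tree rk) : B :=
  \big[badd B/bzero B]_(r <- runs t) bmul B (run_wt r) (wfin A (run_root r)).

End WTA.

Section RA.
Variables (Sigma : finType) (rk : Sigma -> nat) (B : bimonoid) (Q : finType).
Variables (delta : forall s : Sigma, ('I_(rk s) -> Q) -> Q -> B) (F : Q -> B).

Definition wta_of : wta rk B := Wta (enum Q) delta F.

Inductive HA : B -> Prop :=
  | HA_im s (qs : 'I_(rk s) -> Q) q : HA (delta qs q)
  | HA_mul a b : HA a -> HA b -> HA (bmul B a b).

Definition HAF (b : B) : Prop := exists h q, HA h /\ b = bmul B h (F q).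

Definition iA : nat := least (fun n => forall b, HAF b -> (index_of b <= n)%N).
Definition pA : nat :=
  least (fun n => (1 <= n)%N /\ forall b, HAF b -> (period_of b %| n)%N).

Definition JA (n : nat) : nat :=
  if (n < iA)%N then n else (iA + (n - iA) %% pA)%N.

Definition pcount (t : tree rk) (q : Q) (b : B) : nat :=
  count (fun r : run wta_of => (run_root r == q :> Q) && asb (run_wt r = b)) (runs wta_of t).

(* pi_xi : Q x H_A -> nat, represented as a function Q -> B -> nat that
   vanishes outside Q x H_A *)
Definition Qr := Q -> B -> nat.
Definition piA (t : tree rk) : Qr :=
  fun q b => if asb (HA b) then JA (pcount t q b) else 0%N.

Definition R_states : seq Qr :=
  epsilon (inhabits [::]) (fun l => List.NoDup l /\
     forall pi, List.In pi l <-> exists t, pi = piA t).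

Definition rep (pi : Qr) : option (tree rk) :=
  epsilon (inhabits None)
    (fun o => if o is Some t then piA t = pi else False).

Definition R_delta (s : Sigma) (pis : 'I_(rk s) -> Qr) (pi : Qr) : B :=
  if asb (exists ts : 'I_(rk s) -> tree rk,
            (forall i, rep (pis i) = Some (ts i)) /\ pi = piA (Node s ts))
  then bone B else bzero B.

Definition HA_list : seq B :=
  epsilon (inhabits [::]) (fun l => List.NoDup l /\
     forall b, List.In b l <-> HA b).

Definition R_fin (pi : Qr) : B :=
  \big[badd B/bzero B]_(q <- enum Q)
    \big[badd B/bzero B]_(b <- HA_list) nsum (pi q b) (bmul B b (F q)).

Definition R_of : wta rk B := Wta R_states R_delta R_fin.

End RA.

(* Every run weight of A lies in H_A, so grouping the runs on xi by root state
   and weight gives [[A]](xi) = sum over (q, b) in Q x H_A of p_xi(q, b) (b * F_q).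
   Each b * F_q has additive index at most i_A and period dividing p_A, so its
   n-fold sum depends only on J_A(n); hence [[A]](xi) = (F_R)_{pi_xi}.

   The counts p_{sigma(xi_1..xi_k)}(q, b) are sums of products of counts
   p_{xi_i}(q_i, b_i), and J_A is compatible with + and *, so pi_{sigma(xi_1..xi_k)}
   is determined by pi_{xi_1}, ..., pi_{xi_k}.  Thus delta_R is well defined, the
   states pi_xi are bounded maps supported on the finite set Q x H_A (so Q_R is
   finite), and on every xi the automaton R(A) has exactly one run of nonzero
   weight, of weight 1 and root pi_xi.  Hence [[R(A)]](xi) = (F_R)_{pi_xi} too. *)

From HB Require Import structures.
From Stdlib Require Import ClassicalEpsilon FunctionalExtensionality.
From Stdlib Require List.
From mathcomp Require Import all_boot.

Set Implicit Arguments.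
Unset Strict Implicit.
Unset Printing Implicit Defensive.

Lemma asbP (P : Prop) : reflect P (asb P).
Proof. by rewrite /asb; case: excluded_middle_informative => h; constructor. Qed.

Lemma asbT (P : Prop) : P -> asb P = true.
Proof. by move/asbP. Qed.

Lemma asbF (P : Prop) : ~ P -> asb P = false.
Proof. by move=> nP; apply/asbP. Qed.

Lemma asb_pair (T : eqType) (X : Type) (a q : T) (b h : X) :
  asb ((a, b) = (q, h)) = (a == q) && asb (b = h).
Proof. by apply/asbP/andP => [[-> ->]|[/eqP -> /asbP ->]]; rewrite ?eqxx ?asbT. Qed.

Lemma least_spec (P : nat -> Prop) : (exists n, P n) ->
  P (least P) /\ forall m, P m -> least P <= m.
Proof.
move=> [n Pn]; apply: (epsilon_spec (inhabits 0)
  (fun n => P n /\ forall m, P m -> n <= m)).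
have exP : exists n, asb (P n) by exists n; rewrite asbT.
case: (ex_minnP exP) => m /asbP Pm min_m.
by exists m; split => // k Pk; apply: min_m; rewrite asbT.
Qed.

Lemma InP (U : eqType) (x : U) (s : seq U) : reflect (List.In x s) (x \in s).
Proof.
elim: s => [|y s IH]; first by constructor.
rewrite inE; apply: (iffP orP) => [[/eqP->|/IH]|[->|/IH]]; by [left|right|rewrite eqxx].
Qed.

Lemma uniq_NoDup (U : eqType) (s : seq U) : uniq s -> List.NoDup s.
Proof.
elim: s => [|x s IH] /=; first by constructor.
by case/andP=> /negP x_notin_s /IH; constructor => // /InP.
Qed.

Lemma In_hasP (T : Type) (x : T) (s : seq T) :
  reflect (List.In x s) (has (fun y => asb (y = x)) s).
Proof.
elim: s => [|y s IH] /=; first by constructor.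
apply: (iffP orP) => [[/asbP->|/IH]|[->|/IH]]; by [left | right | left; rewrite asbT].
Qed.

Lemma NoDup_of_finite (T : Type) (l : seq T) (P : T -> Prop) :
  (forall x, P x -> List.In x l) ->
  exists l', List.NoDup l' /\ forall x, List.In x l' <-> P x.
Proof.
elim: l P => [|a l IH] P Pl.
  by exists [::]; split; [constructor | move=> x; split => // /Pl].
have [l' [nd_l' Hl']] : exists l', List.NoDup l' /\
    forall x, List.In x l' <-> P x /\ x <> a.
  by apply: IH => x [/Pl [->|] //].
case: (classic (P a)) => Pa.
  exists (a :: l'); split; first by constructor => // /Hl' [].
  move=> x; split => [[<-|/Hl' []] //|Px].
  by case: (classic (x = a)) => [->|xa]; [left | right; apply/Hl'].
exists l'; split => // x; split => [/Hl' []//|Px].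
by apply/Hl'; split => // xa; apply: Pa; rewrite -xa.
Qed.

Lemma In_allpairs (S T R : Type) (f : S -> T -> R) (s : seq S) (t : S -> seq T) x y :
  List.In x s -> List.In y (t x) ->
  List.In (f x y) [seq f x y | x <- s, y <- t x].
Proof.
elim: s => //= a s IH [<- ty|sx ty]; apply/List.in_or_app.
  by left; apply: List.in_map.
by right; apply: IH.
Qed.

Lemma In_allpairs_inv (S T R : Type) (f : S -> T -> R) (s : seq S) (t : S -> seq T) z :
  List.In z [seq f x y | x <- s, y <- t x] ->
  exists x y, [/\ List.In x s, List.In y (t x) & z = f x y].
Proof.
elim: s => //= a s IH z_in.
case: (List.in_app_or _ _ _ z_in) => [/List.in_map_iff [y [<- ty]]|/IH].
  by exists a, y; split => //; left.
by case=> x [y [sx ty ->]]; exists x, y; split => //; right.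
Qed.

Lemma count_allpairs (S T R : Type) (P : pred R) (f : S -> T -> R) (s : seq S) (t : S -> seq T) :
  count P [seq f x y | x <- s, y <- t x] =
  \sum_(x <- s) count (fun y => P (f x y)) (t x).
Proof.
elim: s => [|a s IH] /=; first by rewrite big_nil.
by rewrite count_cat big_cons IH count_map.
Qed.

Lemma eq_In_count (T : Type) (p p' : pred T) (l : seq T) :
  (forall x, List.In x l -> p x = p' x) -> count p l = count p' l.
Proof.
elim: l => //= a l IH pp'.
by rewrite pp' ?IH //; [move=> x lx; apply: pp'; right | left].
Qed.
Arguments eq_In_count {T p} p' {l}.

Lemma NoDup_allpairs (S T : Type) (s : seq S) (t : seq T) :
  List.NoDup s -> List.NoDup t -> List.NoDup [seq (x, y) | x <- s, y <- t].
Proof.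
move=> + nd_t.
have nd_pairs a : List.NoDup [seq (a, y) | y <- t].
  elim: t nd_t => [|b t IHt] /=; first by constructor.
  move/(List.NoDup_cons_iff b t) => [b_notin_t /IHt nd_map].
  constructor => // /List.in_map_iff [y [[yb] ty]].
  by apply: b_notin_t; rewrite -yb.
elim: s => [|a s IH] /=; first by constructor.
move/(List.NoDup_cons_iff a s) => [a_notin_s /IH nd_rest].
apply: List.NoDup_app => // _ /List.in_map_iff [y [<- _]].
move=> ay_in; have [x [y' [sx _ [ax _]]]] := In_allpairs_inv ay_in.
by apply: a_notin_s; rewrite ax.
Qed.

Lemma eq_big_In (R T : Type) (idx : R) (op : R -> R -> R) (l : seq T) (f g : T -> R) :
  (forall x, List.In x l -> f x = g x) ->
  \big[op/idx]_(x <- l) f x = \big[op/idx]_(x <- l) g x.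
Proof.
elim: l => [|a l IH] fg; first by rewrite !big_nil.
by rewrite !big_cons fg ?IH //; [move=> x lx; apply: fg; right | left].
Qed.
Arguments eq_big_In {R T idx op l f} g.

Lemma big_if_asb_eq (R T : Type) (idx : R) (op : Monoid.law idx) (l : seq T) (z : T)
    (f : T -> R) :
  List.NoDup l -> List.In z l ->
  \big[op/idx]_(y <- l) (if asb (z = y) then f y else idx) = f z.
Proof.
elim: l => //= a l IH /(List.NoDup_cons_iff a l) [a_notin_l nd_l].
rewrite big_cons => -[<-|lz].
  rewrite asbT // (eq_big_In (fun=> idx)) ?big1_eq ?Monoid.mulm1 //.
  by move=> y ly; rewrite asbF // => zy; apply: a_notin_l; rewrite zy.
by rewrite asbF ?Monoid.mul1m ?IH // => za; apply: a_notin_l; rewrite -za.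
Qed.

Lemma big_group_by (R S T : Type) (idx : R) (op : Monoid.com_law idx) (lab : S -> T)
    (LX : seq T) (h : T -> R) (l : seq S) :
  List.NoDup LX -> (forall x, List.In x l -> List.In (lab x) LX) ->
  \big[op/idx]_(x <- l) h (lab x) =
  \big[op/idx]_(y <- LX) iter (count (fun x => asb (lab x = y)) l) (op (h y)) idx.
Proof.
move=> nd_LX labLX.
rewrite (eq_big_In (fun x => \big[op/idx]_(y <- LX)
  (if asb (lab x = y) then h y else idx))); last first.
  by move=> x lx; rewrite big_if_asb_eq //; apply: labLX.
by rewrite exchange_big; apply: eq_bigr => y _; rewrite -big_mkcond big_const_seq.
Qed.

Lemma exists_ub_In (T : Type) (l : seq T) (f : T -> nat) :
  exists n, forall x, List.In x l -> f x <= n.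
Proof.
elim: l => [|a l [n ub_n]]; first by exists 0.
exists (maxn (f a) n) => x [<-|lx]; first by rewrite leq_maxl.
by rewrite (leq_trans (ub_n x lx)) // leq_maxr.
Qed.

Lemma exists_multiple_In (T : Type) (l : seq T) (f : T -> nat) :
  (forall x, 0 < f x) -> exists n, 0 < n /\ forall x, List.In x l -> f x %| n.
Proof.
move=> f_gt0; elim: l => [|a l [n [n_gt0 dvd_n]]]; first by exists 1.
exists (f a * n); split; first by rewrite muln_gt0 f_gt0.
by move=> x [<-|lx]; [rewrite dvdn_mulr | rewrite dvdn_mull ?dvd_n].
Qed.

Lemma bounded_maps_finite (Q : finType) (X : Type) (x0 : X) (LX : seq X) (N : nat) :
  exists l : seq (Q -> X -> nat), forall f : Q -> X -> nat,
    (forall q x, f q x < N) -> (forall q x, ~ List.In x LX -> f q x = 0) ->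
    List.In f l.
Proof.
pose C := {ffun Q -> {ffun 'I_(size LX) -> 'I_N}}.
pose pos x := find (fun y => asb (y = x)) LX.
pose decode (c : C) q x := if insub (pos x) is Some j then nat_of_ord (c q j) else 0.
exists (map decode (enum C)) => f f_lt f_supp.
pose code : C := [ffun q => [ffun j : 'I_(size LX) => Ordinal (f_lt q (nth x0 LX j))]].
have -> : f = decode code.
  apply: functional_extensionality => q; apply: functional_extensionality => x.
  rewrite /decode; case: insubP => [j LXx pos_j|]; last first.
    by rewrite -has_find => /In_hasP x_notin; apply: f_supp.
  have has_x : has (fun y => asb (y = x)) LX by rewrite has_find.
  by rewrite !ffunE /= pos_j; congr (f q _); symmetry; apply/asbP/(nth_find x0 has_x).
exact/List.in_map/InP/mem_enum.
Qed.

Definition fcons (T : Type) k (x : T) (g : 'I_k -> T) : 'I_k.+1 -> T :=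
  fun i => if unlift ord0 i is Some j then g j else x.

Lemma fcons0 (T : Type) k (x : T) (g : 'I_k -> T) : fcons x g ord0 = x.
Proof. by rewrite /fcons unlift_none. Qed.

Lemma fcons_lift (T : Type) k (x : T) (g : 'I_k -> T) j : fcons x g (lift ord0 j) = g j.
Proof. by rewrite /fcons liftK. Qed.

Lemma comp_fcons (T X : Type) (h : T -> X) k (x : T) (g : 'I_k -> T) :
  h \o fcons x g = fcons (h x) (h \o g).
Proof. by apply: functional_extensionality => i; rewrite /fcons /=; case: unlift. Qed.

Lemma choicesS (T : Type) k (L : 'I_k.+1 -> seq T) :
  choices L = [seq fcons x g | x <- L ord0, g <- choices (fun j => L (lift ord0 j))].
Proof. by []. Qed.

Lemma choices_In (T : Type) k (L : 'I_k -> seq T) g :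
  List.In g (choices L) -> forall i, List.In (g i) (L i).
Proof.
elim: k L g => [|k IH] L g; first by move=> _ [].
rewrite choicesS => g_in; have [x [g' [Lx g'_in ->]]] := In_allpairs_inv g_in.
move=> i.
case: (unliftP ord0 i) => [j ->|->]; last by rewrite fcons0.
by rewrite fcons_lift; apply: (IH (fun j => L (lift ord0 j))).
Qed.

Lemma forall_fcons (T : Type) k (p : 'I_k.+1 -> pred T) (x : T) (g : 'I_k -> T) :
  [forall i, p i (fcons x g i)] = p ord0 x && [forall j, p (lift ord0 j) (g j)].
Proof.
apply/forallP/andP => [all_p | [px /forallP all_p] i].
  by split; [rewrite -(fcons0 x g) | apply/forallP => j; rewrite -(fcons_lift x g)].
by case: (unliftP ord0 i) => [j ->|->]; rewrite ?fcons_lift ?fcons0.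
Qed.

Lemma count_choices_forall (T : Type) k (L : 'I_k -> seq T) (p : 'I_k -> pred T) :
  count (fun g => [forall i, p i (g i)]) (choices L) = \prod_(i < k) count (p i) (L i).
Proof.
elim: k L p => [|k IH] L p.
  by rewrite big_ord0 /=; case: forallP => // -[] [].
rewrite choicesS count_allpairs big_ord_recl -IH.
rewrite (eq_bigr (fun x => if p ord0 x then
  count (fun g => [forall j, p (lift ord0 j) (g j)]) (choices (fun j => L (lift ord0 j)))
  else 0)) => [|x _]; last first.
  by rewrite (eq_count (forall_fcons p x)); case: (p ord0 x) => //=; rewrite count_pred0.
by rewrite -big_mkcond big_const_seq iter_addn_0 mulnC.
Qed.

(** * Counting modulo an index and a period *)

Section Jmod.
Variables i p : nat.

(* J_A is [jmod (iA delta F) (pA delta F)]. *)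
Definition jmod (n : nat) : nat := if n < i then n else i + (n - i) %% p.

Lemma jmod_modn n : jmod n = n %[mod p].
Proof. by rewrite /jmod; case: ltnP => // le_in; rewrite modnDmr subnKC. Qed.

Lemma jmod_ge n : (i <= jmod n) = (i <= n).
Proof. by rewrite /jmod; case: ltnP => lt_ni; rewrite ?leq_addr // leqNgt lt_ni. Qed.

Lemma jmod_small n : n < i -> jmod n = n.
Proof. by rewrite /jmod => ->. Qed.

Lemma jmod0 : jmod 0 = 0.
Proof. by rewrite /jmod; case: i => //=; rewrite mod0n. Qed.

Lemma eq_jmod x y : i <= x -> i <= y -> x = y %[mod p] -> jmod x = jmod y.
Proof.
move=> le_ix le_iy xy; rewrite /jmod ltnNge le_ix ltnNge le_iy /=; congr addn.
by apply/eqP; rewrite -(eqn_modDl i) !subnKC // xy.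
Qed.

Lemma jmod_id n : jmod (jmod n) = jmod n.
Proof.
case: (ltnP n i) => [lt_ni|le_in]; first by rewrite !jmod_small.
by apply: eq_jmod; rewrite ?jmod_ge ?jmod_modn.
Qed.

Lemma jmodD a b : jmod (a + b) = jmod (jmod a + jmod b).
Proof.
have [large|] := boolP ((i <= a) || (i <= b)); last first.
  by rewrite negb_or -!ltnNge => /andP[/jmod_small-> /jmod_small->].
apply: eq_jmod; last by rewrite -modnDm -[RHS]modnDm !jmod_modn.
  by case/orP: large => le; apply: leq_trans le _; rewrite ?leq_addr ?leq_addl.
by case/orP: large; rewrite -jmod_ge => le; apply: leq_trans le _; rewrite ?leq_addr ?leq_addl.
Qed.

Lemma jmodM a b : jmod (a * b) = jmod (jmod a * jmod b).
Proof.
case: (posnP a) => [->|a_gt0]; first by rewrite !(mul0n, jmod0).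
case: (posnP b) => [->|b_gt0]; first by rewrite !(muln0, jmod0).
have [large|] := boolP ((i <= a) || (i <= b)); last first.
  by rewrite negb_or -!ltnNge => /andP[/jmod_small-> /jmod_small->].
apply: eq_jmod; last by rewrite -modnMm -[RHS]modnMm !jmod_modn.
  by case/orP: large => le; apply: leq_trans le _; rewrite ?leq_pmulr ?leq_pmull.
case: (posnP i) => [->//|i_gt0].
have jmod_gt0 n : 0 < n -> 0 < jmod n.
  by case: (ltnP n i) => [/jmod_small->//|]; rewrite -jmod_ge => /(leq_trans i_gt0).
case/orP: large; rewrite -jmod_ge => le; apply: leq_trans le _.
  by rewrite leq_pmulr ?jmod_gt0.
by rewrite leq_pmull ?jmod_gt0.
Qed.

Lemma jmod_sum (T : Type) (l : seq T) (f : T -> nat) :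
  jmod (\sum_(x <- l) f x) = jmod (\sum_(x <- l) jmod (f x)).
Proof.
elim: l => [|a l IH]; first by rewrite !big_nil.
by rewrite !big_cons jmodD IH -jmodD [RHS]jmodD jmod_id -jmodD.
Qed.

End Jmod.

Lemma jmod_count_choices (i p : nat) (T X : Type) (lab : T -> X) k
    (L L' : 'I_k -> seq T) (P : pred ('I_k -> X)) :
  (forall j y, jmod i p (count (fun t => asb (lab t = y)) (L j)) =
               jmod i p (count (fun t => asb (lab t = y)) (L' j))) ->
  jmod i p (count (fun g => P (lab \o g)) (choices L)) =
  jmod i p (count (fun g => P (lab \o g)) (choices L')).
Proof.
(* Grouping by the label y of the first component, the count is a sum over y of
   (number of first components labelled y) * (count for the other components). *)
elim: k L L' P => [//|k IH] L L' P same_counts.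
pose tail (M : 'I_k.+1 -> seq T) y :=
  count (fun g => P (fcons y (lab \o g))) (choices (fun j => M (lift ord0 j))).
have count_tail M : count (fun g => P (lab \o g)) (choices M) =
                    \sum_(x <- M ord0) tail M (lab x).
  rewrite choicesS count_allpairs; apply: eq_bigr => x _.
  by apply: eq_count => g; rewrite /= comp_fcons.
have [LX [nd_LX LX_labels]] := NoDup_of_finite
  (P := fun y => List.In y (map lab (L ord0 ++ L' ord0))) (fun _ y_in => y_in).
have L_labels x : List.In x (L ord0) -> List.In (lab x) LX.
  by move=> Lx; apply/LX_labels/List.in_map/List.in_or_app; left.
have L'_labels x : List.In x (L' ord0) -> List.In (lab x) LX.
  by move=> L'x; apply/LX_labels/List.in_map/List.in_or_app; right.
rewrite !count_tail (big_group_by _ _ nd_LX L_labels) (big_group_by _ _ nd_LX L'_labels).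
rewrite jmod_sum [RHS]jmod_sum; congr jmod; apply: eq_bigr => y _.
rewrite !iter_addn_0 jmodM [RHS]jmodM same_counts.
by rewrite (IH _ (fun j => L' (lift ord0 j)) (fun v => P (fcons y v))).
Qed.

(** * Additive order in a locally finite monoid *)

Section AdditiveOrder.
Variable B : bimonoid.
Hypothesis add_lf : locally_finite (badd B) (bzero B).

Lemma nsum_eventually_periodic (c : B) :
  exists i k, [/\ 0 < i, 0 < k & nsum i c = nsum (i + k) c].
Proof.
have [l multiples_in_l] := add_lf [:: c].
have In_nsum n : List.In (nsum n c) l.
  apply: multiples_in_l; elim: n => [|n IH]; first exact: gen_unit.
  by apply: gen_op IH; apply: gen_elem; left.
(* Pigeonhole on the positions in l of 0c, 1c, ..., (size l)c. *)
pose pos n := find (fun x => asb (x = nsum n c)) l.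
have has_nsum n : has (fun x => asb (x = nsum n c)) l by apply/In_hasP.
have nth_pos n : nth (bzero B) l (pos n) = nsum n c.
  exact/asbP/(nth_find _ (has_nsum n)).
have /(uniqPn 0) [m [n [lt_mn]]] : ~~ uniq (map pos (iota 0 (size l).+1)).
  apply/negP => /uniq_leq_size le_size.
  have /le_size : {subset map pos (iota 0 (size l).+1) <= iota 0 (size l)}.
    by move=> _ /mapP [n _ ->]; rewrite mem_iota -has_find has_nsum.
  by rewrite size_map !size_iota ltnn.
rewrite size_map size_iota => lt_n.
rewrite !(nth_map 0) ?size_iota ?(ltn_trans lt_mn) // !nth_iota ?(ltn_trans lt_mn) //.
rewrite !add0n => pos_mn; exists m.+1, (n - m); split; rewrite ?subn_gt0 //.
by rewrite addSn subnKC ?(ltnW lt_mn) //= -nth_pos pos_mn nth_pos.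
Qed.

Lemma nsum_periodic (c : B) i p :
  nsum i c = nsum (i + p) c -> forall m, nsum (i + m) c = nsum (i + m %% p) c.
Proof.
move=> period_p.
have shift_p m : nsum (i + m + p) c = nsum (i + m) c.
  by rewrite addnAC addnC /nsum iterD -/(nsum (i + p) c) -period_p -iterD addnC.
move=> m; rewrite {1}(divn_eq m p) [_ + m %% p]addnC.
elim: (m %/ p) => [|k IH]; first by rewrite mul0n addn0.
by rewrite mulSnr (addnA (m %% p)) (addnA i) shift_p IH.
Qed.

Lemma index_period_spec (c : B) :
  [/\ 0 < index_of c, 0 < period_of c &
      nsum (index_of c) c = nsum (index_of c + period_of c) c].
Proof.
have [i [k [i_gt0 k_gt0 ik]]] := nsum_eventually_periodic c.
have [[index_gt0 [k' [k'_gt0 ik']]] _] := least_spec (ex_intro (fun i =>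
  0 < i /\ exists k, 0 < k /\ nsum i c = nsum (i + k) c) i
  (conj i_gt0 (ex_intro _ k (conj k_gt0 ik)))).
have [[period_gt0 period_eq] _] := least_spec (ex_intro (fun p =>
  0 < p /\ nsum (index_of c) c = nsum (index_of c + p) c) k' (conj k'_gt0 ik')).
by split.
Qed.

Lemma nsum_jmod (c : B) I P n :
  index_of c <= I -> period_of c %| P -> nsum (jmod I P n) c = nsum n c.
Proof.
move=> le_index_I dvd_period_P; rewrite /jmod; case: ltnP => // le_In.
have [_ _ /nsum_periodic periodic] := index_period_spec c.
set i := index_of c in le_index_I periodic *.
have -> : I + (n - I) %% P = i + (I - i + (n - I) %% P) by rewrite addnA subnKC.
rewrite -{2}(subnKC (leq_trans le_index_I le_In)) periodic [RHS]periodic.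
rewrite -modnDmr (modn_dvdm _ dvd_period_P) modnDmr addnBAC // subnKC //.
Qed.

End AdditiveOrder.

(** * The automaton R(A) *)

Section RunSemantics.
Variables (Sigma : finType) (rk : Sigma -> nat) (B : bimonoid) (Q : finType).
Variables (delta : forall s : Sigma, ('I_(rk s) -> Q) -> Q -> B) (F : Q -> B).
Hypotheses (HB : strong_bimonoid B) (add_lf : locally_finite (badd B) (bzero B))
  (mul_lf : locally_finite (bmul B) (bone B)).

Let addA : associative (badd B). Proof. by case: HB. Qed.
Let addC : commutative (badd B). Proof. by case: HB => _ []. Qed.
Let add0b : left_id (bzero B) (badd B). Proof. by case: HB => _ [_ []]. Qed.
Let mulA : associative (bmul B). Proof. by case: HB => _ [_ [_ [_ []]]]. Qed.
Let mul1b : left_id (bone B) (bmul B). Proof. by case: HB => _ [_ [_ [_ [_ []]]]]. Qed.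
Let mulb1 : right_id (bone B) (bmul B). Proof. by case: HB => _ [_ [_ [_ [_ [_ []]]]]]. Qed.
Let zero_neq_one : bzero B <> bone B.
Proof. by case: HB => _ [_ [_ [_ [_ [_ [_ []]]]]]]. Qed.
Let mul0b : left_zero (bzero B) (bmul B).
Proof. by case: HB => _ [_ [_ [_ [_ [_ [_ [_ []]]]]]]]. Qed.
Let mulb0 : right_zero (bzero B) (bmul B).
Proof. by case: HB => _ [_ [_ [_ [_ [_ [_ [_ []]]]]]]]. Qed.

HB.instance Definition _ := Monoid.isComLaw.Build B (bzero B) (badd B) addA addC add0b.
HB.instance Definition _ := Monoid.isLaw.Build B (bone B) (bmul B) mulA mul1b mulb1.

Local Notation A := (wta_of delta F).
Local Notation RA := (R_of delta F).
Local Notation pi := (piA delta F).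
Local Notation HAF_list := [seq bmul B h (F q) | h <- HA_list delta, q <- enum Q].

Lemma HA_list_spec :
  List.NoDup (HA_list delta) /\ forall b, List.In b (HA_list delta) <-> HA delta b.
Proof.
pose L s := [seq delta (fun i : 'I_(rk s) => f i) q
  | f : {ffun 'I_(rk s) -> Q} <- enum {ffun 'I_(rk s) -> Q}, q <- enum Q].
pose gens := [seq x | s <- enum Sigma, x <- L s].
have delta_in s (qs : 'I_(rk s) -> Q) q : List.In (delta qs q) gens.
  have -> : delta qs q = delta (fun i => [ffun i => qs i] i) q.
    by congr (delta _ q); apply: functional_extensionality => i; rewrite ffunE.
  apply: (In_allpairs (fun _ x => x)); first exact/InP/mem_enum.
  apply: (In_allpairs (fun (f : {ffun _}) q => delta (fun i : 'I_(rk s) => f i) q));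
    by apply/InP/mem_enum.
have [l gen_in_l] := mul_lf gens.
have HA_in_l b : HA delta b -> List.In b l.
  move=> HAb; apply: gen_in_l; elim: HAb => [s qs q|a b' _ ga _ gb'].
    exact/gen_elem/delta_in.
  exact: gen_op.
exact: epsilon_spec _ _ (NoDup_of_finite HA_in_l).
Qed.

Lemma run_wt_HA (r : run A) : HA delta (run_wt r).
Proof.
elim: r => -[s q] g IH /=.
have [->|HAprod] : \big[bmul B/bone B]_(i < rk s) run_wt (g i) = bone B \/
                   HA delta (\big[bmul B/bone B]_(i < rk s) run_wt (g i)).
- apply: (big_ind (fun x => x = bone B \/ HA delta x)); [by left | | by right].
  move=> x y [->|HAx] [->|HAy]; rewrite ?mul1b ?mulb1; [by left|by right|by right|].
  by right; apply: HA_mul.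
- by rewrite mul1b; apply: HA_im.
- by apply: HA_mul => //; apply: HA_im.
Qed.

Lemma pcount_notHA t q b : ~ HA delta b -> pcount delta F t q b = 0.
Proof.
move=> notHA_b; rewrite -(count_pred0 (runs A t)); apply: eq_count => r /=.
by rewrite asbF ?andbF // => wt_b; apply: notHA_b; rewrite -wt_b; apply: run_wt_HA.
Qed.

Lemma HAF_In b : HAF delta F b -> List.In b HAF_list.
Proof.
case=> h [q [HAh ->]]; apply: (In_allpairs (fun h q => bmul B h (F q))).
  exact/(proj2 HA_list_spec).
exact/InP/mem_enum.
Qed.

Lemma iA_spec b : HAF delta F b -> index_of b <= iA delta F.
Proof.
have [n ub_n] := exists_ub_In HAF_list (@index_of B).
have [iA_ub _] := least_spec (ex_intro (fun n => forall b, HAF delta F b -> index_of b <= n)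
  n (fun b HAFb => ub_n b (HAF_In HAFb))).
exact: iA_ub.
Qed.

Lemma pA_spec : 0 < pA delta F /\ forall b, HAF delta F b -> period_of b %| pA delta F.
Proof.
have period_gt0 (b : B) : 0 < period_of b by have [] := index_period_spec add_lf b.
have [n [n_gt0 dvd_n]] := exists_multiple_In HAF_list period_gt0.
have [pA_mul _] := least_spec (ex_intro (fun n => 0 < n /\
  forall b, HAF delta F b -> period_of b %| n)
  n (conj n_gt0 (fun b HAFb => dvd_n b (HAF_In HAFb)))).
exact: pA_mul.
Qed.

Lemma nsum_JA c n : HAF delta F c -> nsum (JA delta F n) c = nsum n c.
Proof. by move=> HAFc; apply: nsum_jmod => //; [apply: iA_spec | apply: pA_spec.2]. Qed.

Lemma piA_Node_congr s (ts ts' : 'I_(rk s) -> tree rk) :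
  (forall i, pi (ts i) = pi (ts' i)) -> pi (Node s ts) = pi (Node s ts').
Proof.
move=> same_pi; apply: functional_extensionality => q.
apply: functional_extensionality => b; rewrite /piA; case: asbP => // _.
change (JA delta F) with (jmod (iA delta F) (pA delta F)).
rewrite /pcount /= !(count_allpairs _
  (fun (q' : Q) (g : 'I_(rk s) -> run A) => Node (s, q') g : run A)).
rewrite jmod_sum [RHS]jmod_sum; congr jmod.
apply: eq_bigr => q' _.
pose lab (r : run A) := (run_root r, run_wt r).
pose P (v : 'I_(rk s) -> Q * B) := (q' == q) && asb (bmul B
  (\big[bmul B/bone B]_(i < rk s) (v i).2) (delta (fun i => (v i).1) q') = b).
rewrite !(eq_count (a2 := fun g => P (lab \o g))) //.
apply: jmod_count_choices => i [q0 h].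
have count_lab t : count (fun r => asb (lab r = (q0, h))) (runs A t) = pcount delta F t q0 h.
  by apply: eq_count => r; rewrite /lab asb_pair.
rewrite !count_lab; case: (classic (HA delta h)) => HAh; last by rewrite !pcount_notHA.
by have := congr1 (fun f => f q0 h) (same_pi i); rewrite /piA asbT.
Qed.

Lemma piA_lt t q b : pi t q b < iA delta F + pA delta F.
Proof.
have [pA_gt0 _] := pA_spec.
rewrite /piA /JA; case: asb; last by rewrite addn_gt0 pA_gt0 orbT.
case: (ltnP (pcount delta F t q b) (iA delta F)) => [lt_iA|_]; first exact: ltn_addr.
by rewrite ltn_add2l ltn_pmod.
Qed.

Lemma R_states_spec :
  List.NoDup (R_states delta F) /\
  forall p, List.In p (R_states delta F) <-> exists t, p = pi t.
Proof.
have [l bounded_in_l] :=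
  bounded_maps_finite Q (bzero B) (HA_list delta) (iA delta F + pA delta F).
have pi_in_l p : (exists t, p = pi t) -> List.In p l.
  case=> t ->; apply: bounded_in_l => [q b|q b notin_b]; first exact: piA_lt.
  by rewrite /piA asbF // => /(proj2 HA_list_spec).
exact: epsilon_spec _ _ (NoDup_of_finite pi_in_l).
Qed.

Lemma rep_spec t : exists t', rep delta F (pi t) = Some t' /\ pi t' = pi t.
Proof.
have := epsilon_spec (inhabits None)
  (fun o => if o is Some t' then pi t' = pi t else False) (ex_intro _ (Some t) erefl).
rewrite -[epsilon _ _]/(rep delta F (pi t)).
by case: (rep delta F (pi t)) => // t' pi_t'; exists t'.
Qed.

(* delta_R reads its arguments through chosen representatives; by piA_Node_congr
   the choice does not matter. *)
Lemma R_delta_piA s (ts : 'I_(rk s) -> tree rk) p :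
  R_delta delta F (fun i => pi (ts i)) p =
  if asb (pi (Node s ts) = p) then bone B else bzero B.
Proof.
rewrite /R_delta; congr (if _ then _ else _); apply/asbP/asbP.
  case=> ts' [rep_ts' ->]; apply: piA_Node_congr => i.
  have [t' [rep_t' pi_t']] := rep_spec (ts i).
  by move: (rep_ts' i); rewrite rep_t' => -[<-].
move=> <-; exists (fun i => odflt (ts i) (rep delta F (pi (ts i)))); split.
  by move=> i; have [t' [-> _]] := rep_spec (ts i).
by apply: piA_Node_congr => i; have [t' [-> ->]] := rep_spec (ts i).
Qed.

Lemma prod_eq0 k (f : 'I_k -> B) :
  (exists i, f i = bzero B) -> \big[bmul B/bone B]_(i < k) f i = bzero B.
Proof.
elim: k f => [|k IH] f [i fi0]; first by case: i fi0.
rewrite big_ord_recl; move: fi0; case: (unliftP ord0 i) => [j -> fj0|-> ->].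
  by rewrite IH ?mulb0 //; exists j.
by rewrite mul0b.
Qed.

Lemma R_node_wt s (ts : 'I_(rk s) -> tree rk) p (g : 'I_(rk s) -> run RA) :
  (forall i, run_wt (g i) = bzero B \/
             run_wt (g i) = bone B /\ run_root (g i) = pi (ts i)) ->
  run_wt (Node (s, p) g : run RA) =
  if [forall i, asb (run_wt (g i) = bone B)] && asb (pi (Node s ts) = p)
  then bone B else bzero B.
Proof.
move=> children /=.
case: (boolP [forall i, _]) => [/forallP all_one|/forallPn [i /asbP wt_i]] /=; last first.
  rewrite prod_eq0 ?mul0b //; exists i.
  by case: (children i) => // -[].
have roots : (fun i => run_root (g i)) = (fun i => pi (ts i)).
  apply: functional_extensionality => i.
  case: (children i) => [wt0|[]//]; case: zero_neq_one.
  by rewrite -wt0; apply/asbP/all_one.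
by rewrite big1 => [|i _]; [rewrite mul1b roots R_delta_piA | apply/asbP].
Qed.

Lemma R_run_wt_cases xi r : List.In r (runs RA xi) ->
  run_wt r = bzero B \/ run_wt r = bone B /\ run_root r = pi xi.
Proof.
elim: xi r => s ts IH r /= r_in.
have [p [g [_ g_in ->]]] :=
  In_allpairs_inv (f := fun p (g : 'I_(rk s) -> run RA) => Node (s, p) g : run RA) r_in.
rewrite (R_node_wt (ts := ts)) => [|i]; last exact: IH (choices_In g_in i).
by case: ifP => [/andP [_ /asbP <-]|_]; [right | left].
Qed.

Lemma count_R_runs_wt1 xi : count (fun r => asb (run_wt r = bone B)) (runs RA xi) = 1.
Proof.
elim: xi => s ts IH; have [nd_R R_in] := R_states_spec.
rewrite /= (count_allpairs _ (fun p (g : 'I_(rk s) -> run RA) => Node (s, p) g : run RA)).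
transitivity (\sum_(p <- R_states delta F) if asb (pi (Node s ts) = p) then 1 else 0).
  apply: eq_big_In => p _.
  rewrite (eq_In_count (fun g => asb (pi (Node s ts) = p) &&
    [forall i, asb (run_wt (g i) = bone B)])) => [|g g_in].
    case: asbP => _ /=; last by rewrite count_pred0.
    by rewrite (count_choices_forall _ (fun _ r => asb (run_wt r = bone B))) big1.
  rewrite (R_node_wt (ts := ts)) => [|i]; last exact: R_run_wt_cases (choices_In g_in i).
  by rewrite andbC; case: ifP => _; [rewrite asbT | rewrite asbF].
by rewrite big_if_asb_eq //; apply/R_in; exists (Node s ts).
Qed.

Lemma run_sem_R xi : run_sem RA xi = R_fin delta F (pi xi).
Proof.
rewrite /run_sem (eq_big_In (fun r => if asb (run_wt r = bone B)
  then R_fin delta F (pi xi) else bzero B)) => [|r /R_run_wt_cases [->|[-> ->]]].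
- by rewrite -big_mkcond big_const_seq count_R_runs_wt1 /= Monoid.mulm1.
- by rewrite mul0b asbF.
- by rewrite mul1b asbT.
Qed.

Lemma run_sem_A xi : run_sem A xi = R_fin delta F (pi xi).
Proof.
have [nd_HA HA_in] := HA_list_spec.
pose QH := [seq (q, h) | q <- enum Q, h <- HA_list delta].
have nd_QH : List.NoDup QH := NoDup_allpairs (uniq_NoDup (enum_uniq Q)) nd_HA.
have labels_in r : List.In r (runs A xi) -> List.In (run_root r, run_wt r) QH.
  by move=> _; apply: (In_allpairs pair); [apply/InP/mem_enum | apply/HA_in/run_wt_HA].
rewrite /run_sem (big_group_by _ (fun qb => bmul B qb.2 (F qb.1)) nd_QH labels_in) big_allpairs.
apply: eq_bigr => q _; apply: eq_big_In => b /HA_in HA_b.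
rewrite /piA asbT // nsum_JA; last by exists b, q.
by rewrite /nsum /pcount; congr iter; apply: eq_count => r; rewrite asb_pair.
Qed.

End RunSemantics.

Theorem corollary7p5
  (Sigma : finType) (rk : Sigma -> nat) (Hnullary : exists s : Sigma, rk s = 0%N)
  (B : bimonoid) (HB : strong_bimonoid B) (HBlf : bi_locally_finite B)
  (Q : finType) (HQ : (0 < #|Q|)%N)
  (delta : forall s : Sigma, ('I_(rk s) -> Q) -> Q -> B) (F : Q -> B) :
  forall xi : tree rk,
    run_sem (wta_of delta F) xi = run_sem (R_of delta F) xi.
Proof.
case: HBlf => add_lf mul_lf xi.
by rewrite (run_sem_A delta F HB add_lf mul_lf) (run_sem_R delta F HB add_lf mul_lf).
Qed.
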